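(* For all positive integers $m,n,w,d$ with $w\le m$, $$A(m,n,w,d)\le C\left(\binom{m}{w},n,\left\lceil\frac{d}{w}\right\rceil\right).$$
   Context: $J(m,w)$ denotes the set of binary vectors of length $m$ and Hamming weight $w$. Elements of $J(m,w)^n$ are identified with $m\times n$ binary matrices all of whose columns have weight $w$, with binary Hamming distance. $A(m,n,w,d)$ is the maximum cardinality of a nonempty subset of $J(m,w)^n$ with pairwise Hamming distances at least $2d$. $C(q,n,d)$ is the maximum cardinality of a nonempty subset of $[q]^n$, $[q]=\{0,\dots,q-1\}$, with pairwise Hamming distances (number of differing coordinates) at least $d$. *)

From mathcomp Require Import all_boot all_order all_algebra.
Set Implicit Arguments. Unset Strict Implicit. Unset Printing Implicit Defensive.

(* Elements of J(m,w)^n : m x n binary matrices, every column of weight w. *)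
Definition constant_weight_cols (m n w : nat) (M : 'M[bool]_(m, n)) : bool :=
  [forall j : 'I_n, #|[set i : 'I_m | M i j]| == w].

Definition mx_dist (m n : nat) (M N : 'M[bool]_(m, n)) : nat :=
  #|[set ij : 'I_m * 'I_n | M ij.1 ij.2 != N ij.1 ij.2]|.

Definition is_mcw_code (m n w d : nat) (S : {set 'M[bool]_(m, n)}) : bool :=
  [&& S != set0,
      [forall M in S, constant_weight_cols w M] &
      [forall M in S, forall N in S, (M != N) ==> (2 * d <= mx_dist M N)]].

Definition A_max (m n w d : nat) : nat :=
  \max_(S : {set 'M[bool]_(m, n)} | is_mcw_code w d S) #|S|.

Definition ham_dist (q n : nat) (x y : {ffun 'I_n -> 'I_q}) : nat :=
  #|[set i : 'I_n | x i != y i]|.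

Definition is_qary_code (q n d : nat) (S : {set {ffun 'I_n -> 'I_q}}) : bool :=
  [&& S != set0 &
      [forall x in S, forall y in S, (x != y) ==> (d <= ham_dist x y)]].

Definition C_max (q n d : nat) : nat :=
  \max_(S : {set {ffun 'I_n -> 'I_q}} | is_qary_code d S) #|S|.

Definition ceil_div (d w : nat) : nat := (d + w.-1) %/ w.

From mathcomp Require Import all_boot all_order all_algebra.
From mathcomp Require Import zify.
Set Implicit Arguments.
Unset Strict Implicit.
Unset Printing Implicit Defensive.

(* Replace each column of a matrix of J(m,w)^n by the index of its support among
   the 'C(m,w) subsets of size w.  Two distinct supports of size w differ in at
   most 2w positions, so a code with binary distance 2d becomes a q-ary code
   with distance at least ceil(d/w) > 0, which also makes the encoding
   injective on the code. *)

Lemma ceil_div_leq (d w h : nat) : 0 < w -> (ceil_div d w <= h) = (d <= h * w).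
Proof.
by move=> w_gt0; rewrite /ceil_div -ltnS ltn_divLR // mulSn; apply/idP/idP; lia.
Qed.

Lemma ceil_div_gt0 (d w : nat) : 0 < w -> (0 < ceil_div d w) = (0 < d).
Proof. by move=> w_gt0; rewrite !ltnNge ceil_div_leq. Qed.

Lemma card_symdiff_leq (T : finType) (A B : {set T}) :
  #|[set x | (x \in A) != (x \in B)]| <= (A != B) * (#|A| + #|B|).
Proof.
have [<-|_] := eqVneq A B.
  by rewrite leqn0 cards_eq0; apply/eqP/setP => x; rewrite !inE eqxx.
rewrite mul1n; apply: leq_trans (leq_card_setU A B).
apply: subset_leq_card; apply/subsetP => x.
by rewrite !inE; case: (x \in A); case: (x \in B).
Qed.

Lemma exists_inj_in_ord (T : finType) (K : {set T}) (q : nat) :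
  #|K| = q -> 0 < q -> exists f : T -> 'I_q, {in K &, injective f}.
Proof.
move=> cardK q_gt0; have /card_gt0P[x0 x0K] : 0 < #|K| by rewrite cardK.
exists (fun x => cast_ord cardK (enum_rank_in x0K x)) => x y xK yK.
by move/cast_ord_inj; apply: enum_rank_in_inj.
Qed.

Lemma ham_dist_xx (q n : nat) (x : {ffun 'I_n -> 'I_q}) : ham_dist x x = 0.
Proof. by apply/eqP; rewrite cards_eq0; apply/eqP/setP => i; rewrite !inE eqxx. Qed.

Lemma leq_C_max (T : finType) (S : {set T}) (q n d : nat)
    (f : T -> {ffun 'I_n -> 'I_q}) :
  S != set0 -> 0 < d ->
  {in S &, forall x y, x != y -> d <= ham_dist (f x) (f y)} ->
  #|S| <= C_max q n d.
Proof.
move=> S_neq0 d_gt0 f_dist.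
have f_inj : {in S &, injective f}.
  move=> x y xS yS fxy; apply/eqP/contraT => /(f_dist x y xS yS).
  by rewrite fxy ham_dist_xx leqNgt d_gt0.
rewrite -(card_in_imset f_inj); apply: leq_bigmax_cond; apply/andP; split.
  by case/set0Pn: S_neq0 => x xS; apply/set0Pn; exists (f x); apply: imset_f.
apply/forall_inP => _ /imsetP[x xS ->]; apply/forall_inP => _ /imsetP[y yS ->].
by apply/implyP => fxy; apply: f_dist => //; apply: contraNneq fxy => ->.
Qed.

Section ColumnEncoding.

Variables m n : nat.
Implicit Types M N : 'M[bool]_(m, n).

Definition col_set M (j : 'I_n) : {set 'I_m} := [set i | M i j].

Definition col_code (q : nat) (code : {set 'I_m} -> 'I_q) M : {ffun 'I_n -> 'I_q} :=
  [ffun j => code (col_set M j)].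

Lemma mx_dist_sum_cols M N :
  mx_dist M N = \sum_(j < n) #|[set i : 'I_m | M i j != N i j]|.
Proof.
rewrite /mx_dist -sum1_card big_mkcond /=.
under eq_bigr => ij _ do rewrite inE.
rewrite -(pair_big xpredT xpredT (fun i j => if M i j != N i j then 1 else 0)).
rewrite exchange_big; apply: eq_bigr => j _.
by rewrite -sum1_card [RHS]big_mkcond; apply: eq_bigr => i _; rewrite inE.
Qed.

Lemma mx_dist_leq_col_changes (w : nat) M N :
  constant_weight_cols w M -> constant_weight_cols w N ->
  mx_dist M N <= (#|[set j | col_set M j != col_set N j]| * w).*2.
Proof.
move=> /forallP wM /forallP wN.
rewrite mx_dist_sum_cols -mul2n mulnCA -sum_nat_const [leqRHS]big_mkcond.
apply: leq_sum => j _; rewrite inE.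
have := card_symdiff_leq (col_set M j) (col_set N j).
rewrite (eqP (wM j)) (eqP (wN j)) addnn -mul2n.
have -> : [set x | (x \in col_set M j) != (x \in col_set N j)]
          = [set i | M i j != N i j] by apply/setP => i; rewrite !inE.
by case: (_ != _); rewrite ?mul1n ?mul0n.
Qed.

Lemma ham_dist_col_code (q w : nat) (code : {set 'I_m} -> 'I_q) M N :
  {in [set A : {set 'I_m} | #|A| == w] &, injective code} ->
  constant_weight_cols w M -> constant_weight_cols w N ->
  ham_dist (col_code code M) (col_code code N)
  = #|[set j | col_set M j != col_set N j]|.
Proof.
move=> code_inj /forallP wM /forallP wN; apply: eq_card => j; rewrite !inE !ffunE.
by rewrite (inj_in_eq code_inj) // inE ?wM ?wN.
Qed.

End ColumnEncoding.

Theorem proposition10 (m n w d : nat) :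
  0 < m -> 0 < n -> 0 < w -> 0 < d -> w <= m ->
  A_max m n w d <= C_max 'C(m, w) n (ceil_div d w).
Proof.
move=> _ _ w_gt0 d_gt0 w_le_m.
have [code code_inj] : exists code : {set 'I_m} -> 'I_('C(m, w)),
    {in [set A : {set 'I_m} | #|A| == w] &, injective code}.
  by apply: exists_inj_in_ord; rewrite ?card_draws ?card_ord ?bin_gt0.
apply/bigmax_leqP => S /and3P[S_neq0 /forall_inP S_w /forall_inP S_dist].
apply: (leq_C_max (f := col_code code)) => //; first by rewrite ceil_div_gt0.
move=> M N MS NS MN; rewrite ceil_div_leq // (ham_dist_col_code code_inj) ?S_w //.
rewrite -leq_double -mul2n.
apply: leq_trans (mx_dist_leq_col_changes (S_w _ MS) (S_w _ NS)).
by move/forall_inP/(_ N NS)/implyP: (S_dist M MS); apply.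
Qed.
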